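(* Let $K\subseteq\mathbb{R}^d$ be a convex body containing the origin, let $\Lambda\subseteq\mathbb{R}^d$ be a lattice, let $V\subseteq\mathbb{R}^d$ be a rational linear subspace with $\dim V=\ell$, and let $i\in\{1,\dots,d\}$. Let $\pi_V$ denote the orthogonal projection of $\mathbb{R}^d$ onto $V$ and $V^\perp$ the orthogonal complement of $V$. Then $$\mu_i(K,\Lambda)\leqslant \max_{\substack{0\le j\le \ell\\ 0\le i-j\le d-\ell}} \Big(\mu_j(\pi_V(K),\pi_V(\Lambda))+\mu_{i-j}(K\cap V^\perp,\Lambda\cap V^\perp)\Big).$$
   Context: A convex body is a full-dimensional compact convex set; a lattice is a full-rank discrete subgroup. A linear subspace $V$ is rational (with respect to $\Lambda$) if it is spanned by vectors of $\Lambda$; then $\pi_V(\Lambda)$ is a lattice in $V$ and $\Lambda\cap V^\perp$ is a lattice in $V^\perp$. For a $k$-dimensional real vector space $W$, a lattice $\Gamma\subseteq W$, a compact convex set $C\subseteq W$ and $i\in\{1,\dots,k\}$, the $i$-th covering minimum is $\mu_i(C,\Gamma)=\min\{\mu\ge 0: (\mu C+\Gamma)\cap U\neq\emptyset \text{ for every affine subspace } U\subseteq W \text{ of dimension } k-i\}$; by convention $\mu_0(C,\Gamma)=0$. The covering minima of $\pi_V(K)$ and $\pi_V(\Lambda)$ are taken inside $V$, and those of $K\cap V^\perp$ and $\Lambda\cap V^\perp$ inside $V^\perp$. *)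

(* R^d is 'rV[R]_d with the standard
   inner product <x,y> = x *m y^T; linear subspaces are row spaces of
   square matrices (mxalgebra). *)
From HB Require Import structures.
From mathcomp Require Import all_boot all_order all_algebra.
From mathcomp Require Import all_classical all_reals all_analysis.
Set Implicit Arguments. Unset Strict Implicit. Unset Printing Implicit Defensive.
Import Order.TTheory GRing.Theory Num.Theory.
Import numFieldNormedType.Exports.
Local Open Scope classical_set_scope.
Local Open Scope ring_scope.

Section Defs.
Variables (R : realType) (d : nat).
Notation vec := 'rV[R]_d.

Definition convex_set (C : set vec) : Prop :=
  forall x y t, C x -> C y -> 0 <= t <= 1 -> C (t *: x + (1 - t) *: y).

Definition convex_body (K : set vec) : Prop :=
  convex_set K /\ compact K /\ interior K !=set0.

Definition is_lattice (L : set vec) : Prop :=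
  [/\ L 0, (forall x y, L x -> L y -> L (x - y)),
      (exists2 e : R, 0 < e & forall x, L x -> x != 0 -> e <= `|x|) &
      (exists B : 'M[R]_d, (forall k, L (row k B)) /\ \rank B = d)].

Definition rational_subspace (L : set vec) (V : 'M[R]_d) : Prop :=
  exists B : 'M[R]_d, (forall k, L (row k B)) /\ (B == V)%MS.

Definition orth_compl (V : 'M[R]_d) : 'M[R]_d := kermx V^T.

(* image of a set under the orthogonal projection onto V:
   p = pi_V(x) iff p \in V and x - p ⊥ V *)
Definition proj_set (V : 'M[R]_d) (A : set vec) : set vec :=
  [set p | exists2 x, A x & (p <= V)%MS /\ (x - p) *m V^T = 0].

Definition subspace_set (W : 'M[R]_d) : set vec := [set x | (x <= W)%MS].

(* i-th covering minimum of C w.r.t. G inside the linear subspace W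
   (of dimension k = \rank W); affine subspaces of W of dimension k - i are
   a + rowspace M with a \in W, M <= W, \rank M = k - i.
   Taken in the extended reals (+oo if no mu works); mu_0 = 0. *)
Definition covmin (W : 'M[R]_d) (C G : set vec) (i : nat) : \bar R :=
  if i == 0%N then 0%E else
  ereal_inf [set mu%:E | mu in [set mu : R | 0 <= mu /\
    forall (a : vec) (M : 'M[R]_d), (a <= W)%MS -> (M <= W)%MS ->
      \rank M = (\rank W - i)%N ->
      exists c g y, [/\ C c, G g, (y <= M)%MS & mu *: c + g = a + y]]].

End Defs.

(* For an affine subspace [a + M] of codimension [i], let [P] be the orthogonal
   projection of [M] onto [V]; then [dim P + dim (M :&: V^perp) = dim M], so
   [P] has codimension some [j] in [V] and [M :&: V^perp] has codimension
   [i - j] in [V^perp].  Covering [pi_V(a) + P] inside [V] with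
   [mu1 pi_V(K) + pi_V(L)] and then the remaining [V^perp]-component inside
   [V^perp] with [mu2 (K :&: V^perp) + (L :&: V^perp)] covers [a + M] with
   [mu1 K + mu2 K + L], which lies in [(mu1 + mu2) K + L] by convexity. *)
From Pilot Require Import Defs.
From HB Require Import structures.
From mathcomp Require Import all_boot all_order all_algebra.
From mathcomp Require Import all_classical all_reals all_analysis.
From mathcomp Require Import ring lra zify.
Set Implicit Arguments. Unset Strict Implicit. Unset Printing Implicit Defensive.
Import Order.TTheory GRing.Theory Num.Theory.
Local Open Scope classical_set_scope.
Local Open Scope ring_scope.

Section OrthogonalComplement.
Variables (R : realType) (d : nat) (V : 'M[R]_d).
Local Notation W := (orth_compl V).

Lemma sub_orth_compl_eq0 (x : 'rV[R]_d) :
  (x <= V)%MS -> x *m V^T = 0 -> x = 0.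
Proof.
case/submxP=> u ->{x}; set x := u *m V => xV0.
have xx0 : \sum_k x 0 k ^+ 2 = 0.
  have /matrixP/(_ 0 0) := congr1 (mulmx^~ u^T) xV0.
  rewrite mul0mx -mulmxA -trmx_mul !mxE => xx0; rewrite -[RHS]xx0.
  by apply: eq_bigr => k _; rewrite !mxE expr2.
apply/rowP => k; rewrite [RHS]mxE; apply/eqP; rewrite -sqrf_eq0; apply/eqP.
exact: (psumr_eq0P (fun k _ => sqr_ge0 (x 0 k)) xx0).
Qed.

Lemma mxrank_cap_orth_compl : \rank (V :&: W)%MS = 0%N.
Proof.
apply/eqP; rewrite mxrank_eq0 -submx0; apply/row_subP => k.
have kV : (row k (V :&: W) <= V)%MS := submx_trans (row_sub _ _) (capmxSl _ _).
have kW : (row k (V :&: W) <= W)%MS := submx_trans (row_sub _ _) (capmxSr _ _).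
by rewrite (sub_orth_compl_eq0 kV (sub_kermxP kW)) sub0mx.
Qed.

Lemma mxrank_orth_compl : \rank W = (d - \rank V)%N.
Proof. by rewrite mxrank_ker mxrank_tr. Qed.

Lemma addsmx_orth_compl_full : row_full (V + W)%MS.
Proof.
have := mxrank_sum_cap V W.
rewrite mxrank_cap_orth_compl addn0 mxrank_orth_compl /row_full => ->.
by rewrite subnKC // rank_leq_col.
Qed.

Lemma addsmx_decomp m m1 m2 (A : 'M[R]_(m1, d)) (B : 'M[R]_(m2, d))
    (x : 'M[R]_(m, d)) :
  (x <= A + B)%MS -> exists p q, [/\ (p <= A)%MS, (q <= B)%MS & x = p + q].
Proof.
by case/sub_addsmxP=> u ->; exists (u.1 *m A), (u.2 *m B); rewrite !submxMl.
Qed.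

(* [pi_V(M)]: [p] lies in it iff [p \in V] and [p = x + w] with [x \in M] and
   [w] orthogonal to [V]. *)
Definition orth_proj_space (M : 'M[R]_d) := ((M + W) :&: V)%MS.

Lemma mxrank_orth_proj_space (M : 'M[R]_d) :
  (\rank (M :&: W) + \rank (orth_proj_space M) = \rank M)%N.
Proof.
have full : \rank (M + W + V)%MS = d.
  apply/eqP; rewrite eqn_leq rank_leq_col /=.
  rewrite -{1}(eqP addsmx_orth_compl_full); apply: mxrankS.
  by rewrite addsmx_sub addsmxSr (submx_trans (addsmxSr M W)) ?addsmxSl.
have := mxrank_sum_cap M W; have := mxrank_sum_cap (M + W)%MS V.
rewrite full mxrank_orth_compl /orth_proj_space.
have := rank_leq_col V; have := mxrankS (capmxSr (M + W)%MS V); lia.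
Qed.

Lemma orth_split_index (M : 'M[R]_d) i : (i <= d)%N -> \rank M = (d - i)%N ->
  exists2 j, [/\ j <= \rank V, j <= i & i - j <= d - \rank V]%N &
    \rank (orth_proj_space M) = (\rank V - j)%N /\
    \rank (M :&: W)%MS = (\rank W - (i - j))%N.
Proof.
move=> i_le_d rkM; exists (\rank V - \rank (orth_proj_space M))%N;
  have := mxrank_orth_proj_space M; have := mxrankS (capmxSr (M + W)%MS V);
  have := mxrankS (capmxSr M W); have := rank_leq_col V;
  rewrite mxrank_orth_compl rkM /orth_proj_space; by split; lia.
Qed.

End OrthogonalComplement.

Definition covers (R : realType) (d : nat) (W : 'M[R]_d) (C G : set 'rV[R]_d)
    (i : nat) (mu : R) : Prop :=
  0 <= mu /\ forall (a : 'rV[R]_d) (M : 'M[R]_d), (a <= W)%MS -> (M <= W)%MS ->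
    \rank M = (\rank W - i)%N ->
    exists c g y, [/\ C c, G g, (y <= M)%MS & mu *: c + g = a + y].

Section CoveringMinima.
Variables (R : realType) (d : nat) (W : 'M[R]_d) (C G : set 'rV[R]_d).

Lemma covminE i : covmin W C G i =
  if i == 0%N then 0%E else ereal_inf [set mu%:E | mu in covers W C G i].
Proof. by []. Qed.

Lemma covmin_ge0 i : (0 <= covmin W C G i)%E.
Proof.
rewrite covminE; case: ifP => // _.
by apply: le_ereal_inf_tmp => _ [mu [mu_ge0 _] <-]; rewrite lee_fin.
Qed.

Lemma covmin_le (i : nat) (m : R) : i != 0%N ->
  (forall e, 0 < e -> covers W C G i (m + e)) -> (covmin W C G i <= m%:E)%E.
Proof.
move=> i_neq0 covm; apply/lee_addgt0Pr => e e_gt0.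
rewrite covminE (negbTE i_neq0); apply: ereal_inf_lbound.
by exists (m + e); first exact: covm.
Qed.

Hypotheses (C0 : C 0) (G0 : G 0).

Lemma covers0 : covers W C G 0 0.
Proof.
split => // a M aW MW; rewrite subn0 => rkM.
have WM : (W <= M)%MS by rewrite -(mxrank_leqif_sup MW).2 rkM.
exists 0, 0, (- a); split => //.
  by rewrite -scaleN1r scalemx_sub // (submx_trans aW WM).
by rewrite scale0r !add0r subrr.
Qed.

Lemma covmin_adherent i e : 0 < e -> covmin W C G i \is a fin_num ->
  exists mu, covers W C G i mu /\ (mu%:E <= covmin W C G i + e%:E)%E.
Proof.
move=> e_gt0; rewrite covminE; case: ifP => [/eqP -> _ | _ fin].
  by exists 0; split; [exact: covers0 | rewrite add0e lee_fin ltW].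
have [_ [mu covmu <-] /ltW] := lb_ereal_inf_adherent e_gt0 fin.
by exists mu.
Qed.

End CoveringMinima.

Lemma convex_scale_add (R : realType) (d : nat) (K : set 'rV[R]_d)
    (mu mu1 mu2 : R) c1 c2 :
  Defs.convex_set K -> K 0 -> 0 <= mu1 -> 0 <= mu2 -> mu1 + mu2 <= mu ->
  K c1 -> K c2 -> exists2 c, K c & mu *: c = mu1 *: c1 + mu2 *: c2.
Proof.
move=> Kconv K0 mu1_ge0 mu2_ge0 le_mu Kc1 Kc2.
have [s0 | s_neq0] := eqVneq (mu1 + mu2) 0.
  have [-> ->] : mu1 = 0 /\ mu2 = 0 by lra.
  by exists 0; rewrite // !scale0r scaler0 addr0.
have s_gt0 : 0 < mu1 + mu2 by rewrite lt0r s_neq0 addr_ge0.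
have mu_gt0 : 0 < mu := lt_le_trans s_gt0 le_mu.
pose z := (mu1 / (mu1 + mu2)) *: c1 + (1 - mu1 / (mu1 + mu2)) *: c2.
have Kz : K z by apply: Kconv; rewrite // divr_ge0 ?ler_pdivrMr //=; lra.
exists ((mu1 + mu2) / mu *: z + (1 - (mu1 + mu2) / mu) *: 0).
  by apply: Kconv; rewrite // divr_ge0 ?ler_pdivrMr ?mul1r //; lra.
by apply/rowP => k; rewrite !mxE; field; rewrite gt_eqF // s_neq0.
Qed.

Section OrthogonalCovering.
Variables (R : realType) (d : nat) (V : 'M[R]_d) (K L : set 'rV[R]_d).
Local Notation W := (orth_compl V).
Hypothesis L_add : forall x y, L x -> L y -> L (x + y).

Lemma covers_orth_split (M : 'M[R]_d) a j k mu1 mu2 :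
  covers V (proj_set V K) (proj_set V L) j mu1 ->
  covers W (K `&` subspace_set W) (L `&` subspace_set W) k mu2 ->
  \rank (orth_proj_space V M) = (\rank V - j)%N ->
  \rank (M :&: W)%MS = (\rank W - k)%N ->
  exists c1 c2 g y,
    [/\ K c1, K c2, L g, (y <= M)%MS & mu1 *: c1 + mu2 *: c2 + g = a + y].
Proof.
move=> [_ covV] [_ covW] rkP rkMW.
have [a1 [a2 [a1V a2W ->]]] :=
  addsmx_decomp (submx_full a (addsmx_orth_compl_full V)).
have [p [h [y1 [[c Kc [_ /sub_kermxP cW]] [g Lg [_ /sub_kermxP gW]] y1P e1]]]]
  := covV a1 _ a1V (capmxSr _ _) rkP.
have [u [w [uM wW y1E]]] := addsmx_decomp (submx_trans y1P (capmxSl _ _)).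
set b := a1 + a2 + u - mu1 *: c - g.
have bW : (b <= W)%MS.
  have -> : b = a2 - w - mu1 *: (c - p) - (g - h).
    apply/rowP => t; move/rowP: e1 => /(_ t).
    by rewrite /b y1E !mxE; lra.
  by rewrite !addmx_sub ?eqmx_opp ?scalemx_sub.
have [c2 [g2 [y2 [[Kc2 _] [Lg2 _] y2MW e2]]]] := covW b _ bW (capmxSr _ _) rkMW.
exists c, c2, (g + g2), (u + y2); split => //; first exact: L_add.
  by rewrite addmx_sub // (submx_trans y2MW (capmxSl _ _)).
apply/rowP => t; move/rowP: e2 => /(_ t).
by rewrite /b !mxE; lra.
Qed.

Hypotheses (K_convex : Defs.convex_set K) (K0 : K 0) (L0 : L 0).

Lemma covers_orth_sum i (m e : R) : (i <= d)%N -> 0 <= m -> 0 < e ->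
  (forall j, (j <= \rank V)%N -> (j <= i)%N -> (i - j <= d - \rank V)%N ->
     (covmin V (proj_set V K) (proj_set V L) j
      + covmin W (K `&` subspace_set W) (L `&` subspace_set W) (i - j)
      <= m%:E)%E) ->
  covers 1%:M K L i (m + e).
Proof.
move=> i_le_d m_ge0 e_gt0 split_le.
split=> [|a M _ _]; first lra.
rewrite mxrank1 => rkM.
have [j [j_le_rk j_le_i ij_le] [rkP rkMW]] := orth_split_index V i_le_d rkM.
have := split_le j j_le_rk j_le_i ij_le.
set cV := covmin V _ _ _; set cW := covmin W _ _ _ => cVW_le.
have /andP[cV_fin cW_fin] : (cV \is a fin_num) && (cW \is a fin_num).
  rewrite -fin_numD ge0_fin_numE ?adde_ge0 ?covmin_ge0 //.
  exact: le_lt_trans cVW_le (ltry _).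
have e2_gt0 : 0 < e / 2 by rewrite divr_gt0.
have PK0 : proj_set V K 0 by exists 0; rewrite ?sub0mx ?subr0 ?mul0mx.
have PL0 : proj_set V L 0 by exists 0; rewrite ?sub0mx ?subr0 ?mul0mx.
have [mu1 [covV le1]] := covmin_adherent PK0 PL0 e2_gt0 cV_fin.
have [mu2 [covW le2]] :=
  covmin_adherent (conj K0 (sub0mx _ _)) (conj L0 (sub0mx _ _)) e2_gt0 cW_fin.
have mu_le : mu1 + mu2 <= m + e.
  move: cVW_le le1 le2; rewrite -/cV -/cW -(fineK cV_fin) -(fineK cW_fin).
  by rewrite -!EFinD !lee_fin; lra.
have [c1 [c2 [g [y [Kc1 Kc2 Lg yM aMy]]]]] :=
  covers_orth_split a covV covW rkP rkMW.
have [c Kc cE] := convex_scale_add K_convex K0 covV.1 covW.1 mu_le Kc1 Kc2.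
by exists c, g, y; rewrite cE.
Qed.

End OrthogonalCovering.

Theorem theorem1p1 (R : realType) (d : nat) (K L : set 'rV[R]_d)
  (V : 'M[R]_d) (i : nat) :
  convex_body K -> K 0 -> is_lattice L -> rational_subspace L V ->
  (1 <= i <= d)%N ->
  (covmin 1%:M K L i <=
   \big[maxe/-oo]_(j < (\rank V).+1 | (j <= i)%N && (i - j <= d - \rank V)%N)
     (covmin V (proj_set V K) (proj_set V L) j
      + covmin (orth_compl V) (K `&` subspace_set (orth_compl V))
               (L `&` subspace_set (orth_compl V)) (i - j)))%E.
Proof.
move=> [K_convex _] K0 [L0 L_sub _ _] _ /andP[i_gt0 i_le_d].
have L_add x y : L x -> L y -> L (x + y).
  by move=> Lx Ly; rewrite -[y]opprK -[- y]sub0r; apply/L_sub/L_sub.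
set rhs := (X in (_ <= X)%E).
have term_le j : (j <= \rank V)%N -> (j <= i)%N -> (i - j <= d - \rank V)%N ->
  (covmin V (proj_set V K) (proj_set V L) j
   + covmin (orth_compl V) (K `&` subspace_set (orth_compl V))
            (L `&` subspace_set (orth_compl V)) (i - j) <= rhs)%E.
  move=> j_le_rk j_le_i ij_le; rewrite -ltnS in j_le_rk.
  apply: (@le_bigmax_cond _ _ _ _ (Ordinal j_le_rk)).
  by rewrite /= j_le_i ij_le.
have rhs_ge0 : (0 <= rhs)%E.
  have rk_le := rank_leq_col V.
  apply: le_trans (term_le (i - (d - \rank V))%N _ _ _);
    rewrite ?adde_ge0 ?covmin_ge0 //; lia.
case: rhs rhs_ge0 term_le => [m | _ _ | //]; last by rewrite leey.
rewrite lee_fin => m_ge0 term_le; apply: covmin_le; first by rewrite -lt0n.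
by move=> e e_gt0; apply: (covers_orth_sum (V := V)).
Qed.
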